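(* Let $R$ be a unital associative ring and let $J=J_2\circ J_1$ act on $M_3(R)$. Then the domain of $J^n$ does not depend on $n$ for $n\geq 2$. For $n\geq 2$, ${\rm dom}(J^n)={\rm dom}(J)\cap{\rm dom}(J^{-1})$, and $M\in M_3(R)$ belongs to ${\rm dom}(J^n)$ if and only if all square submatrices of $M$ and of $J_2(M)$ are invertible.
   Context: $R^*$ denotes the units of $R$. $M_n^*(R)$ is the set of invertible $n\times n$ matrices over $R$, and $M_n^\star(R)$ the set of $n\times n$ matrices all of whose entries are in $R^*$. $J_1(M)=M^{-1}$ with domain $M_n^*(R)$; $J_2(M)_{jk}=(M_{kj})^{-1}$ with domain $M_n^\star(R)$. Compositions $g\circ f$ have domain $\{x\in{\rm dom}(f):f(x)\in{\rm dom}(g)\}$; $J^n$ is the $n$-fold composition. $J^{-1}:=J_1\circ J_2$, with domain $\{M\in M_n^\star(R): J_2(M)\in M_n^*(R)\}$. *)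

(* Partial maps are represented by their graphs (relations); all maps
   used below are functional (inverses are unique), so the domain of a
   composition is exactly as in the paper. *)
From HB Require Import structures.
From mathcomp Require Import all_boot all_order all_algebra.
Set Implicit Arguments. Unset Strict Implicit. Unset Printing Implicit Defensive.
Import GRing.Theory.
Local Open Scope ring_scope.

Definition pmap (A B : Type) := A -> B -> Prop.
Definition dom (A B : Type) (f : pmap A B) (x : A) : Prop := exists y, f x y.
Definition pcomp (A B C : Type) (g : pmap B C) (f : pmap A B) : pmap A C :=
  fun x z => exists y, f x y /\ g y z.
Fixpoint piter (A : Type) (n : nat) (f : pmap A A) : pmap A A :=
  match n with
  | 0 => fun x y => x = y
  | n'.+1 => pcomp f (piter n' f)
  end.

Section Defs.
Variable R : pzRingType.

Definition mx_invertible (k : nat) (A : 'M[R]_k) : Prop :=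
  exists B : 'M[R]_k, A *m B = 1%:M /\ B *m A = 1%:M.

Definition J1 (k : nat) : pmap 'M[R]_k 'M[R]_k :=
  fun M N => M *m N = 1%:M /\ N *m M = 1%:M.

Definition J2 (k : nat) : pmap 'M[R]_k 'M[R]_k :=
  fun M N => forall i j : 'I_k, M j i * N i j = 1 /\ N i j * M j i = 1.

Definition J (k : nat) : pmap 'M[R]_k 'M[R]_k := pcomp (@J2 k) (@J1 k).
Definition Jinv (k : nat) : pmap 'M[R]_k 'M[R]_k := pcomp (@J1 k) (@J2 k).

Definition all_sq_submx_invertible (m : nat) (M : 'M[R]_m) : Prop :=
  forall (k : nat) (f g : 'I_k -> 'I_m),
    (0 < k)%N ->
    (forall i j : 'I_k, (i < j)%N -> (f i < f j)%N) ->
    (forall i j : 'I_k, (i < j)%N -> (g i < g j)%N) ->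
    mx_invertible (mxsub f g M).

End Defs.

(* Write J(M) = J2(A) with A = M^-1.  M lies in dom J^2 iff A has unit entries and
   J2(A) is invertible with an inverse whose entries are units.  By the Jacobi theorem
   on complementary minors (an entry of M^-1 is a unit iff the complementary minor of M
   is invertible, the inverse being a Schur complement), the last condition says that M
   has unit entries.  The heart of the matter is that, when M and A both have unit
   entries, J2(M) is invertible iff J2(A) is: pivoting on the (0,0) entry, each reduces
   to a unit condition on the 2 x 2 array of quasideterminants of the 2 x 2 submatrices
   through the (0,0) entry, and those of A are the inverses of the complementary ones
   of M.  Hence dom J^2 = dom J /\ dom J^-1, a set which J maps into itself, so dom J^n
   = dom J^2 for all n >= 2; for 3 x 3 matrices Jacobi again turns the conditions into
   the invertibility of all square submatrices of M and of J2(M). *)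

From mathcomp Require Import all_boot all_order all_algebra perm zify.
From Stdlib Require Import ClassicalEpsilon.
Set Implicit Arguments. Unset Strict Implicit. Unset Printing Implicit Defensive.
Import GRing.Theory.
Local Open Scope ring_scope.

Section UnitElements.
Variable R : pzRingType.
Implicit Types x y z u v : R.

Definition is_unit x := exists y, x * y = 1 /\ y * x = 1.

(* [R] carries no inverse operation, so we pick one; it is junk outside units. *)
Definition uinv x : R := epsilon (inhabits 0) (fun y => x * y = 1 /\ y * x = 1).

Lemma uinvP x : is_unit x -> x * uinv x = 1 /\ uinv x * x = 1.
Proof. exact: epsilon_spec. Qed.

Lemma mulr_uinv x : is_unit x -> x * uinv x = 1. Proof. by case/uinvP. Qed.
Lemma mul_uinvr x : is_unit x -> uinv x * x = 1. Proof. by case/uinvP. Qed.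

Lemma uinv_eq x y : x * y = 1 -> y * x = 1 -> uinv x = y.
Proof.
move=> xy1 yx1; have ux : is_unit x by exists y.
by rewrite -[uinv x]mul1r -yx1 -mulrA mulr_uinv // mulr1.
Qed.

Lemma is_unit_uinv x : is_unit x -> is_unit (uinv x).
Proof. by move=> ux; exists x; rewrite mul_uinvr // mulr_uinv. Qed.

Lemma uinvK x : is_unit x -> uinv (uinv x) = x.
Proof. by move=> ux; apply: uinv_eq; rewrite ?mul_uinvr ?mulr_uinv. Qed.

Lemma mulr_uinvK x y : is_unit x -> y * x * uinv x = y.
Proof. by move=> ux; rewrite -mulrA mulr_uinv // mulr1. Qed.

Lemma mulr_uinvKV x y : is_unit x -> y * uinv x * x = y.
Proof. by move=> ux; rewrite -mulrA mul_uinvr // mulr1. Qed.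

Lemma is_unitM x y : is_unit x -> is_unit y -> is_unit (x * y).
Proof.
move=> ux uy; exists (uinv y * uinv x).
by rewrite !mulrA !(mulr_uinvK, mulr_uinvKV) ?mulr_uinv ?mul_uinvr.
Qed.

Lemma is_unitN x : is_unit (- x) <-> is_unit x.
Proof.
split=> -[y [xy yx]]; exists (- y); last by rewrite !mulrNN.
by rewrite mulrN -mulNr xy mulNr -mulrN yx.
Qed.

Lemma uinvN x : is_unit x -> uinv (- x) = - uinv x.
Proof. by move=> ux; apply: uinv_eq; rewrite mulrNN ?mulr_uinv ?mul_uinvr. Qed.

Lemma is_unit_mulLR u v x : is_unit u -> is_unit v ->
  is_unit (u * x * v) <-> is_unit x.
Proof.
move=> uu uv; split=> [uxv|ux]; last by do 2?apply: is_unitM.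
have -> : x = uinv u * (u * x * v) * uinv v.
  by rewrite !mulrA mulr_uinvK // mul_uinvr ?mul1r.
by do 2?apply: is_unitM => //; apply: is_unit_uinv.
Qed.

Lemma uinvM3 x y z : is_unit x -> is_unit y -> is_unit z ->
  uinv (x * y * z) = uinv z * uinv y * uinv x.
Proof.
move=> ux uy uz; apply: uinv_eq.
  by rewrite !mulrA mulr_uinvK // mulr_uinvK // mulr_uinv.
by rewrite !mulrA mulr_uinvKV // mulr_uinvKV // mul_uinvr.
Qed.

End UnitElements.

Section Schur2.
Variable R : pzRingType.
Implicit Types a b c d x y z : R.

Definition schur2 a b c d : R := d - c * uinv a * b.

Lemma schur2_swap_inv a b c d :
  is_unit a -> is_unit d -> is_unit (schur2 a b c d) ->
  let w := uinv a + uinv a * b * uinv (schur2 a b c d) * c * uinv a in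
  schur2 d c b a * w = 1 /\ w * schur2 d c b a = 1.
Proof.
move=> ua ud us; set s := schur2 a b c d => w.
have cab t : t * c * uinv a * b = t * d - t * s.
  by rewrite /s /schur2 -mulrBr opprB addrC subrK -!mulrA.
rewrite /schur2 /w; split.
  rewrite mulrBl !mulrDr !mulrA mulr_uinv // mul1r cab mulrBl.
  rewrite mulr_uinvKV // mulr_uinvK // !mulrBl.
  by rewrite (addrC (b * uinv d * _ * _)) subrK addrK.
rewrite mulrBr !mulrDl !mulrA mul_uinvr // cab !mulrBl.
rewrite !mulr_uinvKV // mulr_uinvK //.
by rewrite (addrC (uinv a * b * uinv d * _)) subrK addrK.
Qed.

Lemma schur2_swap_unit a b c d : is_unit a -> is_unit d ->
  is_unit (schur2 a b c d) <-> is_unit (schur2 d c b a).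
Proof.
move=> ua ud; split=> us.
  by have [? ?] := schur2_swap_inv ua ud us; eexists; split; eassumption.
by have [? ?] := schur2_swap_inv ud ua us; eexists; split; eassumption.
Qed.

Lemma schur2_scale (u0 u1 v0 v1 x00 x01 x10 x11 : R) :
  is_unit u0 -> is_unit v0 -> is_unit x00 ->
  schur2 (u0 * x00 * v0) (u0 * x01 * v1) (u1 * x10 * v0) (u1 * x11 * v1)
  = u1 * schur2 x00 x01 x10 x11 * v1.
Proof.
move=> uu uv ux; rewrite /schur2 uinvM3 // mulrBr mulrBl !mulrA.
by rewrite mulr_uinvK // mulr_uinvKV.
Qed.

Lemma schur2_opp a b c d : is_unit a ->
  schur2 (- a) (- b) (- c) (- d) = - schur2 a b c d.
Proof. by move=> ua; rewrite /schur2 uinvN // mulrNN mulrN opprK opprB addrC. Qed.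

Lemma schur2_uinv a b c d : is_unit a -> is_unit b -> is_unit c -> is_unit d ->
  schur2 (uinv a) (uinv b) (uinv c) (uinv d) = - (uinv c * schur2 d b c a * uinv b).
Proof.
move=> ua ub uc ud; rewrite /schur2 uinvK // mulrBr mulrBl !mulrA.
by rewrite mul_uinvr // mul1r mulr_uinvK // opprB.
Qed.

Lemma schur2_expand (mi al al' ck ck' t tk' t'k t'k' : R) : is_unit t ->
  schur2 t (- ((t * ck + tk' * ck') * mi)) (- (mi * (al * t + al' * t'k)))
    (mi + mi * (al * (t * ck + tk' * ck') + al' * (t'k * ck + t'k' * ck')) * mi)
  = mi + mi * al' * schur2 t tk' t'k t'k' * ck' * mi.
Proof.
move=> ut; rewrite /schur2 mulNr mulNr mulrN opprK.
have -> : mi * (al * t + al' * t'k) * uinv t * ((t * ck + tk' * ck') * mi)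
  = mi * (al * (t * ck + tk' * ck') +
          (al' * t'k * ck + al' * (t'k * uinv t * tk') * ck')) * mi.
  rewrite !(mulrDr, mulrDl) !mulrA mulr_uinvK // mulr_uinvKV //.
rewrite -addrA -mulrBl -mulrBr [_ + al' * (_ + _)]addrC addrKA !mulrA.
rewrite (mulrDr al') !mulrA (addrC (al' * t'k * ck)) addrKA.
by rewrite !mulrBr !mulrBl !mulrA.
Qed.

End Schur2.

Section BlockInverse.
Variable R : pzRingType.
Variables m n : nat.
Implicit Types (a p ai : 'M[R]_m) (d s di w : 'M[R]_n).
Implicit Types (b q : 'M[R]_(m, n)) (c r : 'M[R]_(n, m)).

Lemma mulmx_block_eq1 a b c d p q r s :
  block_mx a b c d *m block_mx p q r s = 1%:M ->
  [/\ a *m p + b *m r = 1%:M, a *m q + b *m s = 0,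
      c *m p + d *m r = 0 & c *m q + d *m s = 1%:M].
Proof.
by rewrite mulmx_block (scalar_mx_block m n) => /eq_block_mx [-> -> -> ->].
Qed.

Lemma mulmxl_addr_eq0 k l (x ix : 'M[R]_k) (y z : 'M[R]_(k, l)) :
  ix *m x = 1%:M -> x *m y + z = 0 -> y = - (ix *m z).
Proof.
move=> xK e; have : ix *m (x *m y + z) = 0 by rewrite e mulmx0.
by rewrite mulmxDr mulmxA xK mul1mx => /eqP; rewrite addr_eq0 => /eqP.
Qed.

Lemma mulmxr_addr_eq0 k l (x ix : 'M[R]_k) (y z : 'M[R]_(l, k)) :
  x *m ix = 1%:M -> y *m x + z = 0 -> y = - (z *m ix).
Proof.
move=> xK e; have : (y *m x + z) *m ix = 0 by rewrite e mul0mx.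
by rewrite mulmxDl -mulmxA xK mulmx1 => /eqP; rewrite addr_eq0 => /eqP.
Qed.

Lemma inv_block_schur_ul a ai b c d p q r s :
  a *m ai = 1%:M -> ai *m a = 1%:M ->
  block_mx a b c d *m block_mx p q r s = 1%:M ->
  block_mx p q r s *m block_mx a b c d = 1%:M ->
  [/\ (d - c *m ai *m b) *m s = 1%:M, s *m (d - c *m ai *m b) = 1%:M,
      q = - (ai *m b *m s), r = - (s *m c *m ai) &
      p = ai + ai *m b *m s *m c *m ai].
Proof.
move=> aK Ka /mulmx_block_eq1 [e1 e2 e3 e4] /mulmx_block_eq1 [f1 f2 f3 f4].
have eq : q = - (ai *m b *m s) by rewrite (mulmxl_addr_eq0 Ka e2) mulmxA.
have er : r = - (s *m c *m ai) := mulmxr_addr_eq0 aK f3.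
split => //.
- by rewrite mulmxBl -e4 eq mulmxN !mulmxA addrC.
- by rewrite mulmxBr -f4 er mulNmx !mulmxA addrC.
- have : (p *m a + q *m c) *m ai = ai by rewrite f1 mul1mx.
  rewrite mulmxDl -mulmxA aK mulmx1 eq !mulNmx => /eqP.
  by rewrite subr_eq => /eqP ->.
Qed.

Lemma inv_block_schur_dr a b c d di p q r s :
  d *m di = 1%:M -> di *m d = 1%:M ->
  block_mx a b c d *m block_mx p q r s = 1%:M ->
  block_mx p q r s *m block_mx a b c d = 1%:M ->
  (a - b *m di *m c) *m p = 1%:M /\ p *m (a - b *m di *m c) = 1%:M.
Proof.
move=> dK Kd /mulmx_block_eq1 [e1 e2 e3 e4] /mulmx_block_eq1 [f1 f2 f3 f4].
have er : r = - (di *m c *m p).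
  by rewrite (mulmxl_addr_eq0 Kd (etrans (addrC _ _) e3)) mulmxA.
have eq : q = - (p *m b *m di).
  exact: mulmxr_addr_eq0 dK (etrans (addrC _ _) f2).
split.
- by rewrite mulmxBl -e1 er mulmxN !mulmxA addrC.
- by rewrite mulmxBr -f1 eq mulNmx !mulmxA addrC.
Qed.

Lemma inv_block_of_schur a ai b c d w :
  a *m ai = 1%:M -> ai *m a = 1%:M ->
  (d - c *m ai *m b) *m w = 1%:M -> w *m (d - c *m ai *m b) = 1%:M ->
  let Z := block_mx (ai + ai *m b *m w *m c *m ai) (- (ai *m b *m w))
                    (- (w *m c *m ai)) w in
  block_mx a b c d *m Z = 1%:M /\ Z *m block_mx a b c d = 1%:M.
Proof.
move=> aK Ka sK Ks Z; rewrite /Z !mulmx_block (scalar_mx_block m n).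
rewrite mulmxBl in sK; rewrite mulmxBr !mulmxA in Ks.
split; congr block_mx.
- by rewrite mulmxDr mulmxN !mulmxA aK !mul1mx addrK.
- by rewrite mulmxN !mulmxA aK mul1mx addNr.
- rewrite mulmxDr !mulmxN !mulmxA.
  by rewrite -{1}[c *m ai]mul1mx -sK mulmxBl !mulmxA subrK subrr.
- by rewrite mulmxN !mulmxA addrC.
- by rewrite mulmxDl mulNmx -[_ *m ai *m a]mulmxA Ka mulmx1 addrK.
- rewrite mulmxDl mulNmx -{1}[ai *m b]mulmx1 -Ks mulmxBr !mulmxA.
  by rewrite subrK subrr.
- by rewrite mulNmx -mulmxA Ka mulmx1 addNr.
- by rewrite mulNmx addrC.
Qed.

End BlockInverse.

Section PivotSchur.
Variable R : pzRingType.

Lemma mx_invertible1 (a : 'M[R]_1) : mx_invertible a <-> is_unit (a ord0 ord0).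
Proof.
have mul11 (x y : 'M[R]_1) : (x *m y) ord0 ord0 = x ord0 ord0 * y ord0 ord0.
  by rewrite mxE big_ord1.
split=> [[b [ab ba]]|[y [ay ya]]].
  by exists (b ord0 ord0); rewrite -!mul11 ab ba mxE.
exists y%:M; split; apply/matrixP => i j;
  by rewrite !ord1 mul11 !mxE /= ?mulr1n.
Qed.

Variable n : nat.
Implicit Types X Y : 'M[R]_(1 + n).

Definition schur00 X : 'M[R]_n :=
  drsubmx X - dlsubmx X *m (uinv (X ord0 ord0))%:M *m ursubmx X.

Lemma lshift_ord0 (k : 'I_1) : (lshift n k : 'I_(1 + n)) = ord0.
Proof. by apply: val_inj; rewrite /= ord1. Qed.

Lemma rshift1 (k : 'I_n) : (rshift 1 k : 'I_(1 + n)) = lift ord0 k.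
Proof. exact: val_inj. Qed.

Lemma schur00E X k l : schur00 X k l =
  schur2 (X ord0 ord0) (X ord0 (lift ord0 l)) (X (lift ord0 k) ord0)
         (X (lift ord0 k) (lift ord0 l)).
Proof.
by rewrite !mxE big_ord1 !mxE big_ord1 !mxE /= mulr1n !rshift1 !lshift_ord0.
Qed.

Lemma ulsubmx_uinv X : is_unit (X ord0 ord0) ->
  ulsubmx X *m (uinv (X ord0 ord0))%:M = 1%:M /\
  (uinv (X ord0 ord0))%:M *m ulsubmx X = 1%:M.
Proof.
move=> u; split; apply/matrixP => i j;
  by rewrite !ord1 mxE big_ord1 !mxE /= !mulr1n lshift_ord0 ?mulr_uinv ?mul_uinvr.
Qed.

Lemma schur00_inv X Y : X *m Y = 1%:M -> Y *m X = 1%:M -> is_unit (X ord0 ord0) ->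
  let ai := (uinv (X ord0 ord0))%:M in
  [/\ schur00 X *m drsubmx Y = 1%:M, drsubmx Y *m schur00 X = 1%:M,
      ursubmx Y = - (ai *m ursubmx X *m drsubmx Y),
      dlsubmx Y = - (drsubmx Y *m dlsubmx X *m ai) &
      ulsubmx Y = ai + ai *m ursubmx X *m drsubmx Y *m dlsubmx X *m ai].
Proof.
move=> XY YX u ai; have [aK Ka] := ulsubmx_uinv u.
rewrite -(submxK X) -(submxK Y) in XY YX.
exact: inv_block_schur_ul aK Ka XY YX.
Qed.

Lemma schur00_invertible X : is_unit (X ord0 ord0) ->
  mx_invertible X <-> mx_invertible (schur00 X).
Proof.
move=> u; have [aK Ka] := ulsubmx_uinv u; split.
  by case=> Y [XY YX]; have [? ? _ _ _] := schur00_inv XY YX u; exists (drsubmx Y).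
case=> w [sK Ks]; have [XZ ZX] := inv_block_of_schur aK Ka sK Ks.
by rewrite submxK in XZ ZX; eexists; split; [exact: XZ | exact: ZX].
Qed.

Lemma pivot_inv_entries X Y : X *m Y = 1%:M -> Y *m X = 1%:M ->
  is_unit (X ord0 ord0) ->
  let mi := uinv (X ord0 ord0) in
  [/\ forall k, Y ord0 (lift ord0 k) =
        - (mi * \sum_j X ord0 (lift ord0 j) * Y (lift ord0 j) (lift ord0 k)),
      forall l, Y (lift ord0 l) ord0 =
        - ((\sum_j Y (lift ord0 l) (lift ord0 j) * X (lift ord0 j) ord0) * mi) &
      Y ord0 ord0 = mi + mi * (\sum_j X ord0 (lift ord0 j) *
        \sum_j' Y (lift ord0 j) (lift ord0 j') * X (lift ord0 j') ord0) * mi].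
Proof.
move=> XY YX u mi; have [_ _ eur edl eul] := schur00_inv XY YX u.
split.
- move=> k; move/matrixP/(_ ord0 k): eur.
  rewrite !mxE !lshift_ord0 !rshift1 => ->; rewrite mul_scalar_mx.
  congr (- _); rewrite mulr_sumr; apply: eq_bigr => j _.
  by rewrite !mxE !lshift_ord0 !rshift1 mulrA.
- move=> l; move/matrixP/(_ l ord0): edl.
  rewrite !mxE big_ord1 !mxE !lshift_ord0 !rshift1 /= mulr1n => ->.
  by congr (- (_ * _)); apply: eq_bigr => j _; rewrite !mxE !lshift_ord0 !rshift1.
- move/matrixP/(_ ord0 ord0): eul.
  rewrite -[_ *m ursubmx X *m _ *m _]mulmxA -[_ *m ursubmx X *m _]mulmxA.
  rewrite mul_scalar_mx !mxE big_ord1 !mxE !lshift_ord0 /= !mulr1n => ->.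
  congr (_ + _ * _); congr (_ * _); apply: eq_bigr => j _.
  rewrite !mxE !lshift_ord0 !rshift1; congr (_ * _); apply: eq_bigr => j' _.
  by rewrite !mxE !lshift_ord0 !rshift1.
Qed.

End PivotSchur.

(* In ['I_2], [lift k ord0] is the index other than [k]. *)
Lemma lift_ord0_ord0 : lift ord0 ord0 = ord_max :> 'I_2.
Proof. exact: val_inj. Qed.

Lemma lift_ord_max_ord0 : lift ord_max ord0 = ord0 :> 'I_2.
Proof. exact: val_inj. Qed.

Lemma ord2P (k : 'I_2) : k = ord0 \/ k = ord_max.
Proof. by case: k => -[|[|//]] ?; [left|right]; apply: val_inj. Qed.

Lemma lift_ord0K (k : 'I_2) : lift (lift k ord0) ord0 = k.
Proof.
by case: (ord2P k) => ->; rewrite ?lift_ord0_ord0 ?lift_ord_max_ord0 // lift_ord0_ord0.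
Qed.

Lemma big_ord2_lift (V : nmodType) (F : 'I_2 -> V) (l : 'I_2) :
  \sum_(j < 2) F j = F l + F (lift l ord0).
Proof.
rewrite big_ord_recl big_ord1 lift_ord0_ord0.
by case: (ord2P l) => ->; rewrite ?lift_ord0_ord0 ?lift_ord_max_ord0 // addrC.
Qed.

Lemma mx_invertible2 (R : pzRingType) (B : 'M[R]_2) : is_unit (B ord0 ord0) ->
  mx_invertible B <->
  is_unit (schur2 (B ord0 ord0) (B ord0 ord_max) (B ord_max ord0) (B ord_max ord_max)).
Proof.
by move=> u; rewrite (@schur00_invertible R 1 B u) mx_invertible1 schur00E lift_ord0_ord0.
Qed.

Section Jacobi.
Variable R : pzRingType.

Lemma mxsub_mul_inj k (f g h : 'I_k -> 'I_k) (X Y : 'M[R]_k) : injective h ->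
  mxsub f h X *m mxsub h g Y = mxsub f g (X *m Y).
Proof.
move=> hI; apply/matrixP => i j; rewrite !mxE [RHS](reindex_inj hI) /=.
by apply: eq_bigr => l _; rewrite !mxE.
Qed.

Lemma mxsub_inv k (f g : 'I_k -> 'I_k) (X Y : 'M[R]_k) :
  injective f -> injective g -> X *m Y = 1%:M -> Y *m X = 1%:M ->
  mxsub f g X *m mxsub g f Y = 1%:M /\ mxsub g f Y *m mxsub f g X = 1%:M.
Proof.
move=> fI gI XY YX; rewrite !mxsub_mul_inj // XY YX.
by split; apply/matrixP => i j; rewrite !mxE ?(inj_eq fI) ?(inj_eq gI).
Qed.

Variable n : nat.
Implicit Types X Y : 'M[R]_(1 + n).

(* [pivot i] moves row/column [i] to position [0], keeping the others in order. *)
Definition pivot (i : 'I_(1 + n)) : 'I_(1 + n) -> 'I_(1 + n) := lift_perm ord0 i 1.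

Lemma pivot_inj i : injective (pivot i). Proof. exact: perm_inj. Qed.
Lemma pivot0 i : pivot i ord0 = i. Proof. exact: lift_perm_id. Qed.
Lemma pivot_lift i k : pivot i (lift ord0 k) = lift i k.
Proof. by rewrite /pivot lift_perm_lift perm1. Qed.

Lemma minor_drsubmx X i j :
  mxsub (lift i) (lift j) X = drsubmx (mxsub (pivot i) (pivot j) X : 'M_(1 + n)).
Proof. by apply/matrixP => k l; rewrite !mxE !rshift1 !pivot_lift. Qed.

Lemma jacobi_minor_inv X Y i j : X *m Y = 1%:M -> Y *m X = 1%:M -> is_unit (Y i j) ->
  schur00 (mxsub (pivot i) (pivot j) Y) *m mxsub (lift j) (lift i) X = 1%:M /\
  mxsub (lift j) (lift i) X *m schur00 (mxsub (pivot i) (pivot j) Y) = 1%:M.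
Proof.
move=> XY YX u.
have [XY' YX'] := mxsub_inv (@pivot_inj j) (@pivot_inj i) XY YX.
have u' : is_unit (mxsub (pivot i) (pivot j) Y ord0 ord0) by rewrite mxE !pivot0.
by have [? ? _ _ _] := schur00_inv YX' XY' u'; rewrite minor_drsubmx.
Qed.

Lemma jacobi_unit X Y i j : X *m Y = 1%:M -> Y *m X = 1%:M ->
  is_unit (Y i j) <-> mx_invertible (mxsub (lift j) (lift i) X).
Proof.
move=> XY YX; split=> [u|[di [dK Kd]]].
  by have [? ?] := jacobi_minor_inv XY YX u; eexists; split; eassumption.
have [XY' YX'] := mxsub_inv (@pivot_inj j) (@pivot_inj i) XY YX.
rewrite minor_drsubmx in dK Kd.
rewrite -[mxsub _ _ X]submxK -[mxsub _ _ Y]submxK in XY' YX'.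
have [pK Kp] := inv_block_schur_dr dK Kd XY' YX'.
have : mx_invertible (ulsubmx (mxsub (pivot i) (pivot j) Y : 'M_(1 + n))).
  by eexists; split; eassumption.
by move/mx_invertible1; rewrite !mxE lshift_ord0 !pivot0.
Qed.

End Jacobi.

Lemma jacobi2 (R : pzRingType) (X Y : 'M[R]_2) l k : X *m Y = 1%:M -> Y *m X = 1%:M ->
  is_unit (Y l k) ->
  let s := schur2 (Y l k) (Y l (lift k ord0)) (Y (lift l ord0) k)
                  (Y (lift l ord0) (lift k ord0)) in
  s * X (lift k ord0) (lift l ord0) = 1 /\ X (lift k ord0) (lift l ord0) * s = 1.
Proof.
move=> XY YX u s; have [sX Xs] := @jacobi_minor_inv R 1 X Y l k XY YX u.
move/matrixP/(_ ord0 ord0): sX; move/matrixP/(_ ord0 ord0): Xs.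
rewrite !mxE !big_ord1 schur00E !mxE !pivot0 !pivot_lift /= !mulr1n.
by move=> -> ->.
Qed.

Section EntrywiseInverse.
Variable R : pzRingType.

Definition J2mx n (X : 'M[R]_n) : 'M[R]_n := \matrix_(i, j) uinv (X j i).

Lemma J2P n (X N : 'M[R]_n) :
  J2 X N <-> (forall i j, is_unit (X i j)) /\ N = J2mx X.
Proof.
split=> [XN|[uX ->] i j]; last by rewrite mxE; exact: uinvP.
split=> [i j|]; first by have [? ?] := XN j i; exists (N j i).
by apply/matrixP => i j; rewrite mxE; have [? ?] := XN i j; symmetry; exact: uinv_eq.
Qed.

Lemma mxsub_J2mx k n (f g : 'I_k -> 'I_n) (X : 'M[R]_n) :
  mxsub f g (J2mx X) = J2mx (mxsub g f X).
Proof. by apply/matrixP => i j; rewrite !mxE. Qed.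

Lemma mx_invertible2_J2mx (B : 'M[R]_2) : (forall i j, is_unit (B i j)) ->
  mx_invertible B <-> mx_invertible (J2mx B).
Proof.
move=> uB; have uJ : is_unit (J2mx B ord0 ord0) by rewrite mxE; exact: is_unit_uinv.
rewrite mx_invertible2 // mx_invertible2 // !mxE schur2_uinv //.
rewrite is_unitN is_unit_mulLR; try exact: is_unit_uinv.
exact: schur2_swap_unit.
Qed.

(* The quasideterminant at [(0, 0)] of the [2 x 2] submatrix of [X] on rows
   [0, l + 1] and columns [0, k + 1]. *)
Definition corner_qdet n (X : 'M[R]_(1 + n)) (l k : 'I_n) : R :=
  schur2 (X (lift ord0 l) (lift ord0 k)) (X (lift ord0 l) ord0)
         (X ord0 (lift ord0 k)) (X ord0 ord0).

Lemma schur00_J2mx n (X : 'M[R]_(1 + n)) k l : (forall i j, is_unit (X i j)) ->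
  schur00 (J2mx X) k l =
  - (uinv (X ord0 (lift ord0 k)) * corner_qdet X l k * uinv (X (lift ord0 l) ord0)).
Proof. by move=> uX; rewrite schur00E !mxE schur2_uinv. Qed.

End EntrywiseInverse.

Section Inverse3.
Variable R : pzRingType.
Implicit Types M A X : 'M[R]_3.

Lemma corner_qdet_mulV M A : M *m A = 1%:M -> A *m M = 1%:M ->
  (forall i j, is_unit (M i j)) -> (forall i j, is_unit (A i j)) ->
  forall l k : 'I_2, let k' := lift k ord0 in let l' := lift l ord0 in
  corner_qdet A l k * corner_qdet M k' l' = 1 /\
  corner_qdet M k' l' * corner_qdet A l k = 1.
Proof.
(* Expanding [A] by the pivot formulas, [corner_qdet A l k] becomes the inverse of
   [corner_qdet M k' l'] provided by [schur2_swap_inv]; its factor [uinv S] is a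
   quasideterminant of [drsubmx A] by Jacobi for the 2 x 2 blocks. *)
move=> MA AM uM uA l k k' l'; have um := uM ord0 ord0.
have [SM MS _ _ _] := @schur00_inv R 2 M A MA AM um.
have TE i j : drsubmx (A : 'M_(1 + 2)) i j = A (lift ord0 i) (lift ord0 j).
  by rewrite !mxE !rshift1.
have uT : is_unit (drsubmx (A : 'M_(1 + 2)) l k) by rewrite TE.
have [sS Ss] := jacobi2 SM MS uT.
rewrite !TE -/k' -/l' schur00E in sS Ss.
set S := schur2 (M ord0 ord0) _ _ _ in sS Ss.
set s := schur2 (A _ _) _ _ _ in sS Ss.
have uS : is_unit S by exists s.
have [Cw wC] := schur2_swap_inv um (uM _ _) uS.
suff -> : corner_qdet A l k = uinv (M ord0 ord0) +
    uinv (M ord0 ord0) * M ord0 (lift ord0 l') * uinv S * M (lift ord0 k') ord0 *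
    uinv (M ord0 ord0) by [].
have [eA0 eAl eA00] := pivot_inv_entries MA AM um.
rewrite /corner_qdet eA00 (big_ord2_lift _ l) !(big_ord2_lift _ k).
rewrite eAl (big_ord2_lift _ k) eA0 (big_ord2_lift _ l) schur2_expand //.
by rewrite -/k' -/l' -/s (uinv_eq Ss sS).
Qed.

Lemma J2mx_invertible3 X : (forall i j, is_unit (X i j)) ->
  is_unit (corner_qdet X ord0 ord0) ->
  mx_invertible (J2mx X) <->
  is_unit (schur2 (corner_qdet X ord0 ord0) (corner_qdet X ord_max ord0)
                  (corner_qdet X ord0 ord_max) (corner_qdet X ord_max ord_max)).
Proof.
move=> uX uC.
have uu i : is_unit (uinv (X ord0 i)) := is_unit_uinv (uX _ _).
have uv i : is_unit (uinv (X i ord0)) := is_unit_uinv (uX _ _).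
have uJ : is_unit (J2mx X ord0 ord0) by rewrite mxE; exact: is_unit_uinv.
have u00 : is_unit (uinv (X ord0 (lift ord0 ord0)) * corner_qdet X ord0 ord0 *
                    uinv (X (lift ord0 ord0) ord0)) by rewrite is_unit_mulLR.
rewrite (@schur00_invertible R 2 _ uJ) mx_invertible2; last first.
  by rewrite schur00_J2mx // is_unitN.
by rewrite !schur00_J2mx // schur2_opp // schur2_scale // is_unitN is_unit_mulLR.
Qed.

Lemma J2mx_invertibleV M A : M *m A = 1%:M -> A *m M = 1%:M ->
  (forall i j, is_unit (M i j)) -> (forall i j, is_unit (A i j)) ->
  mx_invertible (J2mx M) <-> mx_invertible (J2mx A).
Proof.
move=> MA AM uM uA; have CMA := corner_qdet_mulV MA AM uM uA.
have uCM l k : is_unit (corner_qdet M l k).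
  have [CA AC] := CMA (lift k ord0) (lift l ord0).
  by rewrite !lift_ord0K in CA AC; exists (corner_qdet A (lift k ord0) (lift l ord0)).
have CAE l k : corner_qdet A l k = uinv (corner_qdet M (lift k ord0) (lift l ord0)).
  by have [CA AC] := CMA l k; symmetry; apply: uinv_eq.
have uCA l k : is_unit (corner_qdet A l k) by rewrite CAE; exact: is_unit_uinv.
rewrite J2mx_invertible3 // J2mx_invertible3 // !CAE.
rewrite lift_ord0_ord0 lift_ord_max_ord0 schur2_uinv //.
by rewrite is_unitN is_unit_mulLR //; exact: is_unit_uinv.
Qed.

Lemma jacobi_J2mx (M A N : 'M[R]_3) : M *m A = 1%:M -> A *m M = 1%:M ->
  (forall i j, is_unit (A i j)) -> J2mx A *m N = 1%:M -> N *m J2mx A = 1%:M ->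
  forall i j, is_unit (M i j) <-> is_unit (N j i).
Proof.
move=> MA AM uA JN NJ i j.
rewrite (@jacobi_unit R 2 A M) // (@jacobi_unit R 2 (J2mx A) N) // mxsub_J2mx.
by rewrite -mx_invertible2_J2mx // => a b; rewrite mxE.
Qed.

End Inverse3.

Section Iterates.
Variables (T : Type) (f : pmap T T).

Lemma piterSr n x z : piter n.+1 f x z <-> exists y, f x y /\ piter n f y z.
Proof.
elim: n x z => [|n IH] x z /=.
  by split=> [[y [-> fyz]]|[y [fxy <-]]]; [exists z | exists x].
split=> [[y [/IH [w [fxw pwy]] fyz]]|[y [fxy [w [pyw fwz]]]]].
  by exists w; split => //; exists y.
by exists w; split => //; apply/IH; exists y.
Qed.

Lemma dom_piter1 x : dom (piter 1 f) x <-> dom f x.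
Proof. by split=> [[z [y [<- fxz]]]|[z fxz]]; exists z => //; exists x. Qed.

Lemma dom_piterSr n x : dom (piter n.+1 f) x <-> exists y, f x y /\ dom (piter n f) y.
Proof.
split=> [[z /piterSr [y [fxy pyz]]]|[y [fxy [z pyz]]]].
  by exists y; split => //; exists z.
by exists z; apply/piterSr; exists y.
Qed.

End Iterates.

Section Domains.
Variable R : pzRingType.
Implicit Types M : 'M[R]_3.

Lemma dom_J M : dom (@J R 3) M <-> exists A, J1 M A /\ forall i j, is_unit (A i j).
Proof.
split=> [[_ [A [MA /J2P [uA _]]]]|[A [MA uA]]]; first by exists A.
by exists (J2mx A), A; split => //; apply/J2P.
Qed.

Lemma dom_Jinv M :
  dom (@Jinv R 3) M <-> (forall i j, is_unit (M i j)) /\ mx_invertible (J2mx M).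
Proof.
split=> [[Z [_ [/J2P [uM ->] [MZ ZM]]]]|[uM [Z [MZ ZM]]]]; first by split => //; exists Z.
by exists Z, (J2mx M); split => //; apply/J2P.
Qed.

Lemma J_Jinv M N : @J R 3 M N -> @Jinv R 3 N M.
Proof.
by case=> A [[MA AM] AN]; exists A; split=> // i j; have [? ?] := AN j i.
Qed.

Lemma dom_J_iter2 M : dom (piter 2 (@J R 3)) M <-> dom (@J R 3) M /\ dom (@Jinv R 3) M.
Proof.
rewrite dom_piterSr dom_J dom_Jinv; split.
  case=> _ [[A [[MA AM] /J2P [uA ->]]] /dom_piter1/dom_J [N [[JN NJ] uN]]].
  have uM i j : is_unit (M i j) by rewrite (jacobi_J2mx MA AM uA JN NJ).
  split; first by exists A.
  by split=> //; apply/(J2mx_invertibleV AM MA uA uM); exists N.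
case=> [[A [[MA AM] uA]] [uM /(J2mx_invertibleV MA AM uM uA) [N [JN NJ]]]].
exists (J2mx A); split; first by exists A; split => //; apply/J2P.
apply/dom_piter1/dom_J; exists N; split => // i j.
by rewrite -(jacobi_J2mx MA AM uA JN NJ).
Qed.

Lemma dom_J_iter n M : (2 <= n)%N ->
  dom (piter n (@J R 3)) M <-> dom (piter 2 (@J R 3)) M.
Proof.
elim: n M => [//|n IH] M n1; have [-> //|n2] : n = 1%N \/ (2 <= n)%N by lia.
rewrite !dom_piterSr.
split=> [[N [MN /(IH _ n2) /dom_J_iter2 [domN _]]]|[N [MN /dom_piter1 domN]]].
  by exists N; split => //; apply/dom_piter1.
exists N; split => //; apply/IH/dom_J_iter2 => //; split => //.
by exists M; exact: J_Jinv.
Qed.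

End Domains.

Section SquareSubmatrices.
Variable R : pzRingType.

Definition minors3_invertible (X : 'M[R]_3) : Prop :=
  [/\ forall i j, is_unit (X i j),
      forall i j : 'I_3, mx_invertible (mxsub (lift i) (lift j) X) &
      mx_invertible X].

Lemma homo_ltn_ord_leq k m (f : 'I_k -> 'I_m) : {homo f : i j / (i < j)%N} -> (k <= m)%N.
Proof.
move=> fI; suff /leq_card : injective f by rewrite !card_ord.
move=> i j fij; apply/val_inj; case: (ltngtP i j) => // /fI; by rewrite fij ltnn.
Qed.

Lemma ord3P (i : 'I_3) : [\/ i = 0 :> nat, i = 1 :> nat | i = 2 :> nat].
Proof. by case: i => -[|[|[|//]]] ? /=; [apply: Or31 | apply: Or32 | apply: Or33]. Qed.

Lemma homo_ltn_ord2_lift (f : 'I_2 -> 'I_3) :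
  {homo f : i j / (i < j)%N} -> exists j : 'I_3, f =1 lift j.
Proof.
move=> fI; have f01 := fI ord0 ord_max isT.
have [f0|f0|f0] := ord3P (f ord0); have [f1|f1|f1] := ord3P (f ord_max); try lia.
all: [> exists ord_max | exists (@Ordinal 3 1 isT) | exists ord0].
all: by move=> r; apply: val_inj; case: (ord2P r) => -> /=; rewrite ?f0 ?f1.
Qed.

Lemma homo_ltn_ord3_id (f : 'I_3 -> 'I_3) : {homo f : i j / (i < j)%N} -> f =1 id.
Proof.
move=> fI r; apply: val_inj.
have f01 := fI ord0 (@Ordinal 3 1 isT) isT.
have f12 := fI (@Ordinal 3 1 isT) ord_max isT.
have := ltn_ord (f ord_max).
have [->|->|->] : [\/ r = ord0, r = Ordinal (isT : (1 < 3)%N) | r = ord_max].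
  by have [e|e|e] := ord3P r; [apply: Or31 | apply: Or32 | apply: Or33]; apply: val_inj.
all: rewrite /=; lia.
Qed.

Lemma lift_homo_ltn n (i : 'I_n.+1) : {homo lift i : a b / (a < b)%N}.
Proof. by move=> a b; rewrite /= !ltn_neqAle leq_bump2 (inj_eq (can_inj (bumpK i))). Qed.

Lemma all_sq_submx_invertible3 (X : 'M[R]_3) :
  all_sq_submx_invertible X <-> minors3_invertible X.
Proof.
split=> [sqX|[uX minX invX] k f g k0 fI gI].
  split=> [i j|i j|].
  - have cst (i0 : 'I_3) : {homo (fun _ : 'I_1 => i0) : a b / (a < b)%N}.
      by move=> a b; rewrite !ord1.
    by have /mx_invertible1 := sqX 1%N _ _ isT (cst i) (cst j); rewrite mxE.
  - exact: sqX (lift_homo_ltn i) (lift_homo_ltn j).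
  - by rewrite -(mxsub_id X); exact: sqX.
have := homo_ltn_ord_leq fI; case: k f g k0 fI gI => [|[|[|[|//]]]] f g // _ fI gI _.
- by apply/mx_invertible1; rewrite mxE.
- have [i fE] := homo_ltn_ord2_lift fI; have [j gE] := homo_ltn_ord2_lift gI.
  by rewrite (eq_mxsub _ _ fE gE); exact: minX.
- by rewrite (eq_mxsub _ _ (homo_ltn_ord3_id fI) (homo_ltn_ord3_id gI)) mxsub_id.
Qed.

End SquareSubmatrices.

Lemma dom_J_Jinv_minors3 (R : pzRingType) (M : 'M[R]_3) :
  dom (@J R 3) M /\ dom (@Jinv R 3) M <->
  minors3_invertible M /\ minors3_invertible (J2mx M).
Proof.
rewrite dom_J dom_Jinv; split.
  case=> [[A [[MA AM] uA]] [uM invJM]].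
  have minM i j : mx_invertible (mxsub (lift i) (lift j) M).
    exact/(@jacobi_unit R 2 M A).
  split; split=> //; first by exists A.
    by move=> i j; rewrite mxE; exact: is_unit_uinv.
  move=> i j; rewrite mxsub_J2mx -mx_invertible2_J2mx ?minM // => a b.
  by rewrite mxE.
case=> [[uM minM [A [MA AM]]] [_ _ invJM]]; split=> //.
by exists A; split=> // i j; apply/(@jacobi_unit R 2 M A).
Qed.

Theorem proposition1 (R : pzRingType) :
  (forall n m : nat, (2 <= n)%N -> (2 <= m)%N ->
     forall M : 'M[R]_3, dom (piter n (@J R 3)) M <-> dom (piter m (@J R 3)) M) /\
  (forall n : nat, (2 <= n)%N -> forall M : 'M[R]_3,
     dom (piter n (@J R 3)) M <-> (dom (@J R 3) M /\ dom (@Jinv R 3) M)) /\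
  (forall n : nat, (2 <= n)%N -> forall M : 'M[R]_3,
     dom (piter n (@J R 3)) M <->
     (all_sq_submx_invertible M /\
      exists N : 'M[R]_3, J2 M N /\ all_sq_submx_invertible N)).
Proof.
split; [|split] => [n m n2 m2 M|n n2 M|n n2 M]; rewrite ?dom_J_iter //.
- exact: dom_J_iter2.
rewrite dom_J_iter2 dom_J_Jinv_minors3 all_sq_submx_invertible3.
split=> [[minM minJM]|[minM [N [/J2P [_ ->] /all_sq_submx_invertible3 minJM]]]] //.
split=> //; exists (J2mx M); split; last exact/all_sq_submx_invertible3.
by apply/J2P; split=> //; case: minM.
Qed.
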